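(* Let $m\in\mathbb N$, $S$ a set of nonempty subsets of $\{0,\dots,m\}$, $(\beta_\sigma)_{\sigma\in S}$ elements of an ordered abelian group $G$, $(t_e)_{0\le e\le m}$ positive integers, and for $0\le e\le m$ let $(\gamma_{e,j})_{j<\lambda_e}$ ($\lambda_e$ a limit ordinal) be a well-ordered, monotone increasing family of elements $\ge0$ of $G$ without last element. For ordinals $j_e<\lambda_e$ and $\sigma\in S$ put $P_{\sigma,j_\sigma}=\beta_\sigma+\sum_{e\in\sigma}t_e\gamma_{e,j_e}$, where $j_\sigma=(j_e)_{e\in\sigma}$. Then for any ordinals $\rho_e<\lambda_e$ ($0\le e\le m$) there exist ordinals $\rho_e<j_e<\lambda_e$ ($0\le e\le m$) such that the elements $P_{\sigma,j_\sigma}$, $\sigma\in S$, are pairwise different. *)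

From mathcomp Require Import all_boot all_order all_algebra.
Set Implicit Arguments. Unset Strict Implicit. Unset Printing Implicit Defensive.
Import Order.TTheory GRing.Theory.
Local Open Scope ring_scope.

Definition ordered_abelian_group (G : zmodType) (le : rel G) : Prop :=
  [/\ reflexive le, antisymmetric le, transitive le, total le &
      forall x y z : G, le x y -> le (x + z) (y + z)].

Definition ltG (G : zmodType) (le : rel G) (x y : G) : bool := le x y && (x != y).

(* A well-ordered index set without a last element (order type a limit ordinal). *)
Definition limit_wellorder (d : Order.disp_t) (J : orderType d) : Prop :=
  well_founded (fun x y : J => (x < y)%O) /\ (forall j : J, exists k : J, (j < k)%O).

Definition Pval (G : zmodType) (m : nat) (d : Order.disp_t)
  (J : 'I_m.+1 -> orderType d) (beta : {set 'I_m.+1} -> G) (t : 'I_m.+1 -> nat)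
  (gamma : forall e, J e -> G) (sigma : {set 'I_m.+1}) (j : forall e, J e) : G :=
  beta sigma + \sum_(e in sigma) (gamma e (j e)) *+ t e.

From mathcomp Require Import all_boot all_order all_algebra.
Import Order.TTheory GRing.Theory.
Local Open Scope ring_scope.

(* Choose the coordinates j_e one at a time.  Moving coordinate e to x shifts
   every P_sigma with e in sigma by t_e gamma_{e,x} minus a constant and leaves
   every P_tau with e not in tau unchanged; as x |-> t_e gamma_{e,x} is
   injective (strict monotonicity survives multiplication by a positive integer
   in an ordered group), a pair of sets separated by e collides for at most one
   x, while pairs not separated by e keep their difference.  Finitely many
   forbidden values can be avoided above rho_e because lambda_e has no last
   element. *)

Section OrderedGroup.
Context {G : zmodType} {le : rel G} (HG : ordered_abelian_group le).

Lemma leGD x y u v : le x y -> le u v -> le (x + u) (y + v).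
Proof.
case: HG => _ _ le_trans _ leD2r le_xy le_uv.
apply: (le_trans (y + u)); first exact: leD2r.
by rewrite (addrC y) (addrC y); apply: leD2r.
Qed.

Lemma ltG_leD x y u v : ltG le x y -> le u v -> ltG le (x + u) (y + v).
Proof.
case: (HG) => _ le_anti _ _ leD2r /andP[le_xy neq_xy] le_uv.
rewrite /ltG leGD //=; apply: contra neq_xy => /eqP E.
have le_xu_yu : le (x + u) (y + u) by apply: leD2r.
have le_yu_xu : le (y + u) (x + u) by rewrite E (addrC y) (addrC y); apply: leD2r.
by rewrite -(inj_eq (addIr u)); apply/eqP/le_anti; rewrite le_xu_yu le_yu_xu.
Qed.

Lemma ltG_pMn {a b} n : ltG le a b -> ltG le (a *+ n.+1) (b *+ n.+1).
Proof.
move=> lt_ab; elim: n => [|n IHn]; first by rewrite !mulr1n.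
by rewrite (mulrS a) (mulrS b); apply: ltG_leD => //; case/andP: IHn.
Qed.

Lemma ltG_mono_mulrn_inj {d} {J : orderType d} {f : J -> G} n :
  {homo f : x y / (x < y)%O >-> ltG le x y} -> injective (fun x => f x *+ n.+1).
Proof.
move=> f_mono x y /= E.
by case: (ltgtP x y) => // lt_xy; have := ltG_pMn n (f_mono _ _ lt_xy);
  rewrite /ltG E eqxx andbF.
Qed.

End OrderedGroup.

Lemma exists_gt_avoid_subsingletons {d} {J : orderType d} {I : Type}
    {bad : I -> pred J} :
  (forall i x y, bad i x -> bad i y -> x = y) ->
  (forall r : J, exists k, (r < k)%O) ->
  forall (s : seq I) (r : J), exists2 x, (r < x)%O & all (fun i => ~~ bad i x) s.
Proof.
move=> bad_uniq nomax; elim=> [|i s IHs] r /=.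
  by have [x lt_rx] := nomax r; exists x.
have [x1 lt_rx1 ok_x1] := IHs r.
case bad_x1 : (bad i x1); last by exists x1; rewrite ?bad_x1.
have [x2 lt_x12 ok_x2] := IHs x1; exists x2; first exact: lt_trans lt_x12.
rewrite ok_x2 andbT; apply: contraTN lt_x12 => /(bad_uniq _ _ _ bad_x1) ->.
by rewrite ltxx.
Qed.

Section PvalUpdate.
Context {G : zmodType} {m : nat} {d : Order.disp_t} {J : 'I_m.+1 -> orderType d}.
Context (beta : {set 'I_m.+1} -> G) (t : 'I_m.+1 -> nat) (gamma : forall e, J e -> G).
Context (j : forall e, J e) (e0 : 'I_m.+1).

Local Notation P sigma j := (Pval beta t gamma sigma j).

Lemma Pval_dfwith_notin (sigma : {set 'I_m.+1}) (x : J e0) :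
  e0 \notin sigma -> P sigma (dfwith j x) = P sigma j.
Proof.
move=> e0_sigma; rewrite /Pval; congr (_ + _); apply: eq_bigr => e e_sigma.
by rewrite dfwith_out //; apply: contraNneq e0_sigma => ->.
Qed.

Lemma Pval_dfwith_in (sigma : {set 'I_m.+1}) (x : J e0) :
  e0 \in sigma ->
  P sigma (dfwith j x) = P sigma j + (gamma e0 x *+ t e0 - gamma e0 (j e0) *+ t e0).
Proof.
move=> e0_sigma; rewrite /Pval !(bigD1 e0 e0_sigma) /= dfwith_in.
rewrite (eq_bigr (fun e => gamma e (j e) *+ t e)) => [|e /andP[_ ne_e]]; last first.
  by rewrite dfwith_out // eq_sym.
rewrite -addrA; congr (_ + _).
by rewrite addrAC [gamma e0 (j e0) *+ _ + _]addrC addrNK.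
Qed.

Lemma Pval_dfwith_eq_same (sigma tau : {set 'I_m.+1}) (x : J e0) :
  (e0 \in sigma) = (e0 \in tau) ->
  (P sigma (dfwith j x) == P tau (dfwith j x)) = (P sigma j == P tau j).
Proof.
have [e0_sigma|e0_sigma] := boolP (e0 \in sigma) => e0_tau.
  by rewrite !Pval_dfwith_in -?e0_tau // (inj_eq (addIr _)).
by rewrite !Pval_dfwith_notin -?e0_tau.
Qed.

Lemma Pval_dfwith_eq_uniq (sigma tau : {set 'I_m.+1}) (x y : J e0) :
  injective (fun z => gamma e0 z *+ t e0) -> (e0 \in sigma) != (e0 \in tau) ->
  P sigma (dfwith j x) = P tau (dfwith j x) ->
  P sigma (dfwith j y) = P tau (dfwith j y) -> x = y.
Proof.
move=> scaled_inj; wlog e0_sigma : sigma tau / e0 \in sigma.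
  move=> wlog_in; case/orP: (orbN (e0 \in sigma)); first exact: wlog_in.
  move=> e0_sigma sep Ex Ey.
  have e0_tau : e0 \in tau.
    by apply: contraNT sep => e0_tau; rewrite (negPf e0_sigma) (negPf e0_tau).
  by apply: (wlog_in tau sigma) e0_tau _ (esym Ex) (esym Ey); rewrite eq_sym.
move=> sep; have e0_tau : e0 \notin tau.
  by apply: contraNN sep => ->; rewrite e0_sigma.
rewrite !(Pval_dfwith_in _ _ e0_sigma) !(Pval_dfwith_notin _ _ e0_tau) => + Ey.
by rewrite -Ey => /addrI /addIr; apply: scaled_inj.
Qed.

End PvalUpdate.

Section Separation.
Context {G : zmodType} {m : nat} (S : {set {set 'I_m.+1}}) (beta : {set 'I_m.+1} -> G).
Context {t : 'I_m.+1 -> nat} {d : Order.disp_t} {J : 'I_m.+1 -> orderType d}.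
Context {gamma : forall e, J e -> G} (rho : forall e, J e).
Hypothesis gamma_scaled_inj : forall e, injective (fun x => gamma e x *+ t e).
Hypothesis J_nomax : forall e (r : J e), exists k, (r < k)%O.

Local Notation P sigma j := (Pval beta t gamma sigma j).

Lemma exists_Pval_separating (s : seq 'I_m.+1) :
  exists j : forall e, J e, (forall e, e \in s -> (rho e < j e)%O) /\
    forall sigma tau, sigma \in S -> tau \in S -> sigma != tau ->
      (forall e, e \notin s -> (e \in sigma) = (e \in tau)) ->
      P sigma j != P tau j.
Proof.
elim: s => [|e0 s [j [rho_lt sep]]].
  exists rho; split=> // sigma tau _ _ /eqP neq agree.
  by case: neq; apply/setP => e; apply: agree.
pose bad (p : {set 'I_m.+1} * {set 'I_m.+1}) (x : J e0) :=
  [&& p.1 \in S, p.2 \in S, (e0 \in p.1) != (e0 \in p.2) &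
      P p.1 (dfwith j x) == P p.2 (dfwith j x)].
have bad_uniq p x y : bad p x -> bad p y -> x = y.
  case/and4P=> _ _ e0_sep /eqP Ex /and4P[_ _ _ /eqP Ey].
  exact: Pval_dfwith_eq_uniq (gamma_scaled_inj e0) e0_sep Ex Ey.
have [x rho_x /allP good_x] := exists_gt_avoid_subsingletons bad_uniq
  (@J_nomax e0) (enum {: {set 'I_m.+1} * {set 'I_m.+1}}) (rho e0).
exists (dfwith j x); split=> [e|sigma tau S_sigma S_tau neq agree].
  rewrite in_cons; case: (eqVneq e0 e) => [<- _|ne_e]; first by rewrite dfwith_in.
  by move=> /rho_lt; rewrite dfwith_out.
have [e0_same|e0_sep] := eqVneq (e0 \in sigma) (e0 \in tau).
  rewrite Pval_dfwith_eq_same //; apply: sep => // e e_s.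
  by case: (eqVneq e e0) => [-> //|ne_e]; apply: agree; rewrite in_cons negb_or ne_e.
by have := good_x (sigma, tau) (mem_enum _ _); rewrite /bad S_sigma S_tau e0_sep.
Qed.

End Separation.

Theorem lemma2p1 (G : zmodType) (le : rel G) (HG : ordered_abelian_group le)
  (m : nat) (S : {set {set 'I_m.+1}})
  (HS : forall sigma, sigma \in S -> sigma != set0)
  (beta : {set 'I_m.+1} -> G) (t : 'I_m.+1 -> nat) (Ht : forall e, (0 < t e)%N)
  (d : Order.disp_t) (J : 'I_m.+1 -> orderType d)
  (HJ : forall e, limit_wellorder (J e))
  (gamma : forall e, J e -> G)
  (Hgamma_mono : forall e (i k : J e), (i < k)%O -> ltG le (gamma e i) (gamma e k))
  (Hgamma_nonneg : forall e (i : J e), le 0 (gamma e i))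
  (rho : forall e, J e) :
  exists j : forall e, J e,
    (forall e, (rho e < j e)%O) /\
    (forall sigma tau, sigma \in S -> tau \in S -> sigma != tau ->
       Pval beta t gamma sigma j != Pval beta t gamma tau j).
Proof.
have gamma_scaled_inj e : injective (fun x => gamma e x *+ t e).
  by rewrite -(prednK (Ht e)); exact: (ltG_mono_mulrn_inj HG _ (Hgamma_mono e)).
have [j [rho_lt sep]] := exists_Pval_separating S beta rho gamma_scaled_inj
  (fun e => (HJ e).2) (enum 'I_m.+1).
exists j; split=> [e|sigma tau S_sigma S_tau neq]; first by rewrite rho_lt ?mem_enum.
by apply: sep => // e; rewrite mem_enum.
Qed.
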